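(* For every coloring $c:S^1\to\{R,B\}$ there exists a distinguishing coloring $c^*:S^1\to\{R,B\}$ such that $c(x)\neq c^*(x)$ for at most three points $x\in S^1$.
   Context: The group $O(2)$ of isometries of the unit circle $S^1$ (rotations and reflections) acts on $S^1$. A coloring $c:S^1\to\{R,B\}$ is distinguishing if no non-identity $\gamma\in O(2)$ satisfies $c\circ\gamma=c$. *)

From Stdlib Require Export Reals List.
Open Scope R_scope.

Definition onS1 (p : R * R) : Prop := fst p ^ 2 + snd p ^ 2 = 1.

(* Elements of O(2): orthogonal 2x2 matrices
     rotation   (refl = false):  [[a, -b], [b,  a]]
     reflection (refl = true ):  [[a,  b], [b, -a]]
   with a^2 + b^2 = 1.  Every element of O(2) is of exactly one of these forms. *)
Record O2 : Type := mkO2 {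
  o2_a : R;
  o2_b : R;
  o2_refl : bool;
  o2_unit : o2_a ^ 2 + o2_b ^ 2 = 1
}.

Definition o2_act (g : O2) (p : R * R) : R * R :=
  let (x, y) := p in
  if o2_refl g
  then (o2_a g * x + o2_b g * y, o2_b g * x - o2_a g * y)
  else (o2_a g * x - o2_b g * y, o2_b g * x + o2_a g * y).

Inductive color : Type := Red | Blue.

(* A coloring of S^1 is given as a function on R^2; only its values on S^1 matter. *)
Definition coloring := (R * R) -> color.

Definition o2_is_id (g : O2) : Prop := forall p, onS1 p -> o2_act g p = p.

Definition distinguishing (c : coloring) : Prop :=
  forall g : O2, ~ o2_is_id g -> ~ (forall p, onS1 p -> c (o2_act g p) = c p).

(* If flipping the colour of one point already makes c distinguishing, we are done.
   Otherwise every one-point flip of c has a nontrivial symmetry.  If c itself has a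
   nontrivial rotational symmetry, these flips force every reflection to preserve c,
   so c is constant.  If not, for all but finitely many points y the symmetry of the
   flip at y is a reflection w_y exchanging y with a point of the other colour; chasing
   colours along products of two such reflections shows that w_y y is the same point s
   for all but finitely many y.  Then c with s flipped is preserved by all but finitely
   many reflections, hence constant, so c is constant off s.  A monochromatic circle
   with the three vertices of a scalene triangle recoloured is distinguishing, and
   taking one vertex at s makes it differ from c in at most three points. *)

From Stdlib Require Import Reals List Lra Psatz Classical.
From Coquelicot Require Import Complex.
Import ListNotations.
Open Scope R_scope.
Local Open Scope C_scope.

Lemma onS1_neq0 (p : C) : onS1 p -> p <> 0.
Proof. unfold onS1. intros H ->. simpl in H. lra. Qed.

Lemma onS1_Cconj (p : C) : onS1 p -> onS1 (Cconj p).
Proof. destruct p as [a b]. unfold onS1; simpl. lra. Qed.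

Lemma Cconj_onS1 (p : C) : onS1 p -> Cconj p = / p.
Proof.
  destruct p as [x y]. unfold onS1, Cinv, Cconj. simpl. intros H.
  replace (x * (x * 1) + y * (y * 1))%R with 1%R by lra.
  f_equal; field.
Qed.

Lemma onS1_mult (p q : C) : onS1 p -> onS1 q -> onS1 (p * q).
Proof.
  destruct p as [a b], q as [x y]. unfold onS1; simpl. intros H1 H2.
  replace ((a * x - b * y) * ((a * x - b * y) * 1) + (a * y + b * x) * ((a * y + b * x) * 1))%R
    with ((a * (a * 1) + b * (b * 1)) * (x * (x * 1) + y * (y * 1)))%R by ring.
  rewrite H1, H2. ring.
Qed.

Lemma onS1_inv (p : C) : onS1 p -> onS1 (/ p).
Proof. intros H. rewrite <- Cconj_onS1 by exact H. now apply onS1_Cconj. Qed.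

Lemma onS1_div (p q : C) : onS1 p -> onS1 q -> onS1 (p / q).
Proof. intros. apply onS1_mult; auto using onS1_inv. Qed.

Lemma onS1_opp (p : C) : onS1 p -> onS1 (- p).
Proof. destruct p as [a b]. unfold onS1; simpl. lra. Qed.

Lemma Cmult_integral (a b : C) : a * b = 0 -> a = 0 \/ b = 0.
Proof.
  intros H. destruct (classic (a = 0)) as [Ha|Ha]; [now left|right].
  replace b with (/ a * (a * b)) by (field; exact Ha). rewrite H. ring.
Qed.

Lemma Csqr_eq (z w : C) : z * z = w * w -> z = w \/ z = - w.
Proof.
  intros H. assert (E : (z - w) * (z + w) = 0).
  { replace ((z - w) * (z + w)) with (z * z - w * w) by ring. rewrite H. ring. }
  destruct (Cmult_integral _ _ E) as [E'|E']; [left|right].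
  - replace z with (z - w + w) by ring. rewrite E'. ring.
  - replace z with (z + w - w) by ring. rewrite E'. ring.
Qed.

Lemma onS1_sqrt (z : C) : onS1 z -> exists y, onS1 y /\ y * y = z.
Proof.
  destruct z as [a b]. unfold onS1; simpl. intros H.
  destruct (Req_EM_T a (-1)) as [->|Ha].
  - exists (0, 1)%R. unfold onS1, Cmult; simpl. split; [lra|].
    assert (b = 0)%R by nra. subst b. f_equal; ring.
  - assert (Hk : (0 < 2 + 2 * a)%R) by nra.
    set (k := sqrt (2 + 2 * a)).
    assert (Kk : (k * k = 2 + 2 * a)%R) by (apply sqrt_sqrt; lra).
    assert (Kp : (0 < k)%R) by (apply sqrt_lt_R0; lra).
    (* the square root [(1 + z) / |1 + z|] *)
    exists ((1 + a) / k, b / k)%R. unfold onS1, Cmult; simpl. split; [|f_equal].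
    all: apply (Rmult_eq_reg_r (k * k)); [|nra]; field_simplify; try lra;
      replace (k ^ 2)%R with (k * k)%R by ring; rewrite Kk; nra.
Qed.


Definition rot (s p : C) : C := s * p.
Definition refl (a p : C) : C := a * Cconj p.

Lemma refl_onS1 (a p : C) : onS1 p -> refl a p = a / p.
Proof. intros Hp. unfold refl. now rewrite Cconj_onS1. Qed.

Lemma onS1_rot (s p : C) : onS1 s -> onS1 p -> onS1 (rot s p).
Proof. apply onS1_mult. Qed.

Lemma onS1_refl (a p : C) : onS1 a -> onS1 p -> onS1 (refl a p).
Proof. intros. apply onS1_mult; auto using onS1_Cconj. Qed.

Lemma refl_involutive (a p : C) : onS1 a -> onS1 p -> refl a (refl a p) = p.
Proof.
  intros Ha Hp. rewrite (refl_onS1 a (refl a p)) by auto using onS1_refl.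
  rewrite refl_onS1 by exact Hp.
  field. split; auto using onS1_neq0.
Qed.

Lemma refl_refl (a b p : C) : onS1 b -> onS1 p -> refl a (refl b p) = rot (a / b) p.
Proof.
  intros Hb Hp. rewrite (refl_onS1 a (refl b p)) by auto using onS1_refl.
  rewrite refl_onS1 by exact Hp. unfold rot. field. split; auto using onS1_neq0.
Qed.

Lemma rot_fixed (s y : C) : onS1 y -> rot s y = y -> s = 1.
Proof.
  unfold rot. intros Hy E. replace s with (s * y / y) by (field; auto using onS1_neq0).
  rewrite E. field. auto using onS1_neq0.
Qed.

Lemma refl_eq (a y s : C) : onS1 y -> refl a y = s -> a = s * y.
Proof.
  intros Hy E. rewrite refl_onS1 in E by exact Hy. rewrite <- E. field. auto using onS1_neq0.
Qed.

Lemma O2_cases (g : O2) : ~ o2_is_id g ->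
  (exists s : C, onS1 s /\ s <> 1 /\ forall p, o2_act g p = rot s p) \/
  (exists a : C, onS1 a /\ forall p, o2_act g p = refl a p).
Proof.
  destruct g as [a b r Hab]. intros N.
  assert (Hu : onS1 (a, b)) by exact Hab.
  unfold o2_act, rot, refl, Cmult, Cconj in *; simpl in *. destruct r.
  - right. exists (a, b). split; auto. intros [x y]. simpl. f_equal; ring.
  - left. exists (a, b). split; [auto|split].
    + intros [= -> ->]. apply N. intros [x y] _. simpl. f_equal; ring.
    + intros [x y]. simpl. f_equal; ring.
Qed.

Definition invariant (c : coloring) (g : C -> C) : Prop :=
  forall p, onS1 p -> c (g p) = c p.

Definition rot_symmetric (c : coloring) : Prop :=
  exists s : C, onS1 s /\ s <> 1 /\ invariant c (rot s).

Definition symmetric (c : coloring) : Prop :=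
  rot_symmetric c \/ exists a : C, onS1 a /\ invariant c (refl a).

Lemma symmetric_of_not_distinguishing (c : coloring) : ~ distinguishing c -> symmetric c.
Proof.
  intros N. apply not_all_ex_not in N as [g N]. apply imply_to_and in N as [Ng N].
  apply NNPP in N.
  destruct (O2_cases g Ng) as [[s [Hs [Ns E]]] | [a [Ha E]]]; [left; exists s | right; exists a];
    repeat split; auto; intros p Hp; rewrite <- E; auto.
Qed.

Definition Ceq_dec (p q : C) : {p = q} + {p <> q}.
Proof.
  destruct p as [a b], q as [x y].
  destruct (Req_EM_T a x) as [<-|Na]; [destruct (Req_EM_T b y) as [<-|Nb]|];
    [left | right | right]; congruence.
Defined.

Definition swap_color (k : color) : color := match k with Red => Blue | Blue => Red end.

Lemma swap_color_neq (k : color) : swap_color k <> k.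
Proof. now destruct k. Qed.

Lemma neq_swap_color (k l : color) : k <> l -> l = swap_color k.
Proof. destruct k, l; simpl; congruence. Qed.

Definition flip (c : coloring) (e : C) : coloring :=
  fun p => if Ceq_dec p e then swap_color (c p) else c p.

Lemma flip_invariant_off (c : coloring) (e : C) (g : C -> C) (p : C) :
  invariant (flip c e) g -> onS1 p -> p <> e -> g p <> e -> c (g p) = c p.
Proof.
  intros H Hp Np Ngp. specialize (H p Hp). unfold flip in H.
  destruct (Ceq_dec (g p) e); [contradiction|]. now destruct (Ceq_dec p e).
Qed.

Lemma flip_invariant_moved (c : coloring) (e : C) (g : C -> C) :
  invariant (flip c e) g -> onS1 e -> g e <> e -> c (g e) <> c e.
Proof.
  intros H He N. specialize (H e He). unfold flip in H.
  destruct (Ceq_dec (g e) e); [contradiction|]. destruct (Ceq_dec e e); [|contradiction].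
  rewrite H. apply swap_color_neq.
Qed.

Lemma flip_refl_off (c : coloring) (e a p : C) : onS1 a -> onS1 e ->
  invariant (flip c e) (refl a) -> onS1 p -> p <> e -> p <> refl a e -> c (refl a p) = c p.
Proof.
  intros Ha He H Hp N1 N2. apply (flip_invariant_off c e); auto.
  intros E. apply N2. rewrite <- E. now rewrite refl_involutive.
Qed.

Definition cofinitely (P : C -> Prop) : Prop :=
  exists L : list C, forall y, onS1 y -> ~ In y L -> P y.

Definition circle_point (n : nat) : C :=
  let t := (INR n + 1)%R in ((1 - t * t) / (1 + t * t), 2 * t / (1 + t * t))%R.

Lemma onS1_circle_point (n : nat) : onS1 (circle_point n).
Proof.
  unfold onS1, circle_point. simpl. pose proof (pos_INR n).
  field. nra.
Qed.

Lemma circle_point_inj (n m : nat) : circle_point n = circle_point m -> n = m.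
Proof.
  unfold circle_point. intros [= E _]. pose proof (pos_INR n). pose proof (pos_INR m).
  apply INR_eq.
  assert (E' : ((INR n + 1) * (INR n + 1) = (INR m + 1) * (INR m + 1))%R).
  { apply (Rmult_eq_compat_r ((1 + (INR n + 1) * (INR n + 1)) * (1 + (INR m + 1) * (INR m + 1))))
      in E.
    field_simplify in E; nra. }
  nra.
Qed.

Lemma exists_onS1_notin (L : list C) : exists y, onS1 y /\ ~ In y L.
Proof.
  apply NNPP. intros N.
  assert (Hin : incl (map circle_point (seq 0 (S (length L)))) L).
  { intros y Hy. apply in_map_iff in Hy as [n [<- _]].
    apply NNPP. intros Hn. apply N. exists (circle_point n). split; auto using onS1_circle_point. }
  apply NoDup_incl_length in Hin.
  - rewrite length_map, length_seq in Hin. lia.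
  - apply NoDup_map_NoDup_ForallPairs; auto using seq_NoDup.
    intros n m _ _. apply circle_point_inj.
Qed.

Lemma cofinitely_witness (P : C -> Prop) : cofinitely P -> exists y, onS1 y /\ P y.
Proof.
  intros [L HL]. destruct (exists_onS1_notin L) as [y [Hy Ny]]. exists y. auto.
Qed.

Lemma cofinitely_and (P Q : C -> Prop) :
  cofinitely P -> cofinitely Q -> cofinitely (fun y => P y /\ Q y).
Proof.
  intros [L HL] [M HM]. exists (L ++ M). intros y Hy N.
  split; [apply HL | apply HM]; auto; intros I; apply N; apply in_or_app; auto.
Qed.

Lemma cofinitely_mono (P Q : C -> Prop) :
  (forall y, onS1 y -> P y -> Q y) -> cofinitely P -> cofinitely Q.
Proof. intros H [L HL]. exists L. auto. Qed.

Lemma cofinitely_notin (L : list C) : cofinitely (fun y => ~ In y L).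
Proof. now exists L. Qed.

Lemma cofinitely_Csqr_neq (m : C) : cofinitely (fun y => y * y <> m).
Proof.
  destruct (classic (onS1 m)) as [Hm|Hm].
  - destruct (onS1_sqrt m Hm) as [r [_ <-]]. exists [r; - r].
    intros y _ N E. apply N. destruct (Csqr_eq y r E); simpl; auto.
  - exists []. intros y Hy _ <-. apply Hm. now apply onS1_mult.
Qed.

Lemma cofinitely_scale (k : C) (P : C -> Prop) :
  onS1 k -> cofinitely P -> cofinitely (fun y => P (k * y)).
Proof.
  intros Hk [L HL]. exists (map (fun z => z / k) L). intros y Hy N.
  apply HL; [now apply onS1_mult|]. intros I. apply N.
  replace y with (k * y / k) by (field; auto using onS1_neq0).
  now apply (in_map (fun z => z / k)).
Qed.

Lemma constant_of_cofinitely_refl (d : coloring) :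
  cofinitely (fun a => invariant d (refl a)) -> forall p q, onS1 p -> onS1 q -> d p = d q.
Proof.
  intros H p q Hp Hq.
  destruct (cofinitely_witness _ (cofinitely_and _ _ (cofinitely_scale p _ Hp H)
                                                   (cofinitely_scale q _ Hq H)))
    as [m [Hm [Ip Iq]]].
  assert (Ep : refl (p * m) p = m) by (rewrite refl_onS1 by exact Hp; field; auto using onS1_neq0).
  assert (Eq : refl (q * m) q = m) by (rewrite refl_onS1 by exact Hq; field; auto using onS1_neq0).
  rewrite <- (Ip p Hp), <- (Iq q Hq), Ep, Eq. reflexivity.
Qed.

Section RotationSymmetric.

Variables (c : coloring) (r : C).
Hypotheses (Hr : onS1 r) (Nr : r <> 1) (Ir : invariant c (rot r)).

Lemma flip_not_rot_symmetric (y : C) : onS1 y -> ~ rot_symmetric (flip c y).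
Proof.
  intros Hy [s [Hs [Ns Is]]].
  assert (Nsy : rot s y <> y) by (intros E; exact (Ns (rot_fixed s y Hy E))).
  apply (flip_invariant_moved c y _ Is Hy Nsy).
  assert (Esr : c (rot s (rot r y)) = c y).
  { destruct (Ceq_dec (rot s (rot r y)) y) as [->|N]; [reflexivity|].
    rewrite (flip_invariant_off c y (rot s)); auto using onS1_rot.
    intros E. exact (Nr (rot_fixed r y Hy E)). }
  rewrite <- Ir by auto using onS1_rot.
  replace (rot r (rot s y)) with (rot s (rot r y)) by (unfold rot; ring). exact Esr.
Qed.

Lemma flip_refl_fixes (y a : C) : onS1 y -> onS1 a ->
  invariant (flip c y) (refl a) -> refl a y = y.
Proof.
  intros Hy Ha Ia. apply NNPP. intros F.
  apply (flip_invariant_moved c y _ Ia Hy F).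
  assert (Ery : c (rot r y) = c y) by auto.
  destruct (Ceq_dec (rot r y) (refl a y)) as [<-|N]; [exact Ery|].
  rewrite <- Ery, <- (flip_refl_off c y a (rot r y)); auto using onS1_rot.
  - replace (refl a y) with (rot r (refl a (rot r y))).
    + apply Ir. auto using onS1_refl, onS1_rot.
    + rewrite !refl_onS1 by auto using onS1_rot. unfold rot.
      field. split; auto using onS1_neq0.
  - intros E. exact (Nr (rot_fixed r y Hy E)).
Qed.

End RotationSymmetric.

Lemma invariant_of_flip_refl_fixed (c : coloring) (y a : C) : onS1 a -> onS1 y ->
  invariant (flip c y) (refl a) -> refl a y = y -> invariant c (refl a).
Proof.
  intros Ha Hy I F p Hp. destruct (Ceq_dec p y) as [->|N]; [now rewrite F|].
  apply (flip_refl_off c y a); auto. now rewrite F.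
Qed.

Lemma constant_of_rot_symmetric (c : coloring) : rot_symmetric c ->
  (forall e, onS1 e -> symmetric (flip c e)) -> forall p q, onS1 p -> onS1 q -> c p = c q.
Proof.
  intros [r [Hr [Nr Ir]]] Hsym. apply constant_of_cofinitely_refl. exists [].
  intros a' Ha' _. destruct (onS1_sqrt a' Ha') as [y [Hy Ey]].
  destruct (Hsym y Hy) as [Rs | [a [Ha Ia]]].
  - exfalso. exact (flip_not_rot_symmetric c r Hr Nr Ir y Hy Rs).
  - pose proof (flip_refl_fixes c r Hr Nr Ir y a Hy Ha Ia) as F.
    rewrite <- Ey, <- (refl_eq a y y Hy F).
    exact (invariant_of_flip_refl_fixed c y a Ha Hy Ia F).
Qed.

Lemma rot_flip_partner (c : coloring) (x y s t : C) :
  onS1 x -> onS1 y -> onS1 s -> onS1 t -> s <> 1 -> t <> 1 ->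
  invariant (flip c x) (rot s) -> invariant (flip c y) (rot t) ->
  y <> x -> rot s y <> x -> rot t y = x \/ rot t y = x / s.
Proof.
  intros Hx Hy Hs Ht Ns Nt Is It Nyx Nsy. apply NNPP. intros H.
  apply not_or_and in H as [N1 N2].
  assert (N2' : rot s (rot t y) <> x).
  { intros E. apply N2. rewrite <- E. unfold rot. field. auto using onS1_neq0. }
  assert (Ety : c (rot s (rot t y)) = c (rot t y))
    by (apply (flip_invariant_off c x); auto using onS1_rot).
  destruct (Ceq_dec (rot t (rot s y)) y) as [E|E].
  - (* then [s t = 1], and the point [s x] is carried to [x] by [rot t] *)
    assert (Etx : rot t (rot s x) = x).
    { unfold rot in *. replace (t * (s * x)) with (t * (s * y) / y * x)
        by (field; auto using onS1_neq0). rewrite E. field. auto using onS1_neq0. }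
    assert (Nsx : rot s x <> y) by (intros E'; apply N1; now rewrite <- E').
    apply (flip_invariant_moved c x _ Is Hx); [intros E'; exact (Ns (rot_fixed s x Hx E'))|].
    rewrite <- Etx at 2. symmetry. apply (flip_invariant_off c y); auto using onS1_rot.
    rewrite Etx. auto.
  - apply (flip_invariant_moved c y _ It Hy); [intros E'; exact (Nt (rot_fixed t y Hy E'))|].
    rewrite <- Ety, <- (flip_invariant_off c x (rot s) y); auto.
    rewrite <- (flip_invariant_off c y (rot t) (rot s y)); auto using onS1_rot.
    + f_equal. unfold rot. ring.
    + intros E'. exact (Ns (rot_fixed s y Hy E')).
Qed.

Lemma rot_flip_square (c : coloring) (x y s t : C) :
  onS1 x -> onS1 y -> onS1 s -> onS1 t -> s <> 1 -> t <> 1 ->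
  invariant (flip c x) (rot s) -> invariant (flip c y) (rot t) ->
  y <> x -> y <> s * x -> y <> x / s -> y <> - x -> y * y = s * x * x \/ y * y = x * x / s.
Proof.
  intros Hx Hy Hs Ht Ns Nt Is It N1 N2 N3 N4.
  pose proof (onS1_neq0 x Hx). pose proof (onS1_neq0 y Hy).
  pose proof (onS1_neq0 s Hs). pose proof (onS1_neq0 t Ht).
  assert (Nsy : rot s y <> x).
  { intros E. apply N3. rewrite <- E. unfold rot. field. auto. }
  destruct (rot_flip_partner c x y s t Hx Hy Hs Ht Ns Nt Is It N1 Nsy) as [E1|E1];
    unfold rot in E1;
    (destruct (Ceq_dec (t * x) y) as [E2|E2];
     [| destruct (rot_flip_partner c y x t s Hy Hx Ht Hs Nt Ns It Is (not_eq_sym N1) E2)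
          as [E3|E3]; unfold rot in E3; [now contradiction N2|] ]).
  - exfalso. assert (T : t * t = -1 * -1).
    { replace (t * t) with (t * (t * y) / y) by (field; auto). rewrite E1, E2. field. auto. }
    destruct (Csqr_eq t (-1) T) as [T'|T'].
    + apply N4. rewrite <- E1, T'. ring.
    + apply Nt. rewrite T'. apply injective_projections; simpl; ring.
  - left. transitivity (s * x * (t * y)); [rewrite E3; field; auto | now rewrite E1].
  - right. transitivity (x * (t * y)); [rewrite <- E2 at 1; ring | rewrite E1; field; auto].
  - exfalso. assert (Y : y = (s * t) * x).
    { replace y with (y / t * t) by (field; auto). rewrite <- E3. ring. }
    assert (T : (s * t) * (s * t) = 1 * 1).
    { replace ((s * t) * (s * t)) with (s * (t * y) / x) by (rewrite Y; field; auto).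
      rewrite E1. field. auto. }
    destruct (Csqr_eq (s * t) 1 T) as [T'|T']; rewrite T' in Y.
    + apply N1. rewrite Y. ring.
    + apply N4. rewrite Y. ring.
Qed.

Lemma cofinitely_flip_not_rot_symmetric (c : coloring) :
  cofinitely (fun y => ~ rot_symmetric (flip c y)).
Proof.
  destruct (classic (exists x, onS1 x /\ rot_symmetric (flip c x)))
    as [[x [Hx [s [Hs [Ns Is]]]]]|N].
  - apply (cofinitely_mono (fun y => ~ In y [x; s * x; x / s; - x] /\
                                     y * y <> s * x * x /\ y * y <> x * x / s)).
    + intros y Hy [Ny [Q1 Q2]] [t [Ht [Nt It]]]. simpl in Ny.
      destruct (rot_flip_square c x y s t); auto; intros E; apply Ny; auto.
    + repeat apply cofinitely_and; auto using cofinitely_notin, cofinitely_Csqr_neq.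
  - exists []. intros y Hy _ Ry. apply N. eauto.
Qed.

Definition refl_partner (c : coloring) (y a : C) : Prop :=
  onS1 a /\ invariant (flip c y) (refl a) /\ refl a y <> y.

Lemma refl_swap (a p q : C) : onS1 a -> onS1 p -> refl a p = q -> p = refl a q.
Proof. intros Ha Hp <-. now rewrite refl_involutive. Qed.

Lemma refl_refl_swap (a b p q : C) : onS1 a -> onS1 b -> onS1 p ->
  refl b (refl a p) = q -> p = refl a (refl b q).
Proof.
  intros Ha Hb Hp <-. rewrite refl_involutive; auto using onS1_refl.
  now rewrite refl_involutive.
Qed.

Lemma refl_refl_fixed (a b p : C) : onS1 a -> onS1 p -> refl b (refl a p) = p -> b = a.
Proof.
  intros Ha Hp E. rewrite refl_refl in E by auto. apply rot_fixed in E; auto.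
  replace b with (b / a * a) by (field; auto using onS1_neq0). rewrite E. ring.
Qed.

Lemma invariant_refl_refl (c : coloring) (a b : C) : onS1 b ->
  invariant c (refl a) -> invariant c (refl b) -> invariant c (rot (a / b)).
Proof.
  intros Hb Ia Ib p Hp. rewrite <- refl_refl by auto. rewrite Ia by auto using onS1_refl. auto.
Qed.

Lemma cofinitely_not_refl_square (c : coloring) : ~ rot_symmetric c ->
  cofinitely (fun y => ~ invariant c (refl (y * y))).
Proof.
  intros NR. destruct (classic (exists a, onS1 a /\ invariant c (refl a))) as [[a [Ha Ia]]|N].
  - apply (cofinitely_mono (fun y => y * y <> a)); [|apply cofinitely_Csqr_neq].
    intros y Hy Ny I. apply NR. exists (y * y / a). repeat split.
    + apply onS1_div; auto using onS1_mult.
    + intros E. apply Ny. replace (y * y) with (y * y / a * a) by (field; auto using onS1_neq0).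
      rewrite E. ring.
    + now apply invariant_refl_refl.
  - exists []. intros y Hy _ I. apply N. exists (y * y). auto using onS1_mult.
Qed.

Lemma cofinitely_refl_partner (c : coloring) : ~ rot_symmetric c ->
  (forall e, onS1 e -> symmetric (flip c e)) -> cofinitely (fun y => exists a, refl_partner c y a).
Proof.
  intros NR Hsym.
  refine (cofinitely_mono _ _ _ (cofinitely_and _ _ (cofinitely_flip_not_rot_symmetric c)
                                                   (cofinitely_not_refl_square c NR))).
  intros y Hy [Ry Iy]. destruct (Hsym y Hy) as [Rs | [a [Ha Ia]]]; [contradiction|].
  exists a. repeat split; auto. intros F. apply Iy.
  rewrite <- (refl_eq a y y Hy F). exact (invariant_of_flip_refl_fixed c y a Ha Hy Ia F).
Qed.

Lemma refl_partner_unique (c : coloring) (x y a : C) : onS1 x -> onS1 y ->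
  refl_partner c x a -> invariant (flip c y) (refl a) -> y <> x -> y <> refl a x -> False.
Proof.
  intros Hx Hy [Ha [Ix F]] Iy N1 N2. apply (flip_invariant_moved c x _ Ix Hx F).
  apply (flip_refl_off c y a); auto.
  intros E. apply N2. apply refl_swap; auto.
Qed.

Lemma cofinitely_not_refl_partner (c : coloring) (a : C) :
  cofinitely (fun y => ~ refl_partner c y a).
Proof.
  destruct (classic (exists x, onS1 x /\ refl_partner c x a)) as [[x [Hx Px]]|N].
  - exists [x; refl a x]. intros y Hy Ny [_ [Iy _]].
    apply (refl_partner_unique c x y a); auto; intros E; apply Ny; simpl; auto.
  - exists []. intros y Hy _ Py. apply N. eauto.
Qed.

Lemma refl_partner_sym (c : coloring) (y w : C) : onS1 y ->
  refl_partner c y w -> refl_partner c (refl w y) w.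
Proof.
  intros Hy [Hw [I F]]. set (s := refl w y) in *.
  assert (Hs : onS1 s) by now apply onS1_refl.
  assert (Ews : refl w s = y) by now apply refl_involutive.
  assert (K : c s <> c y) by now apply (flip_invariant_moved c y).
  split; [exact Hw | split; [|congruence]].
  intros p Hp. unfold flip.
  destruct (Ceq_dec p y) as [->|Py]; [|destruct (Ceq_dec p s) as [->|Ps]].
  - fold s. destruct (Ceq_dec s s), (Ceq_dec y s); try congruence.
    symmetry. now apply neq_swap_color.
  - rewrite Ews. destruct (Ceq_dec y s), (Ceq_dec s s); try congruence.
    now apply neq_swap_color.
  - destruct (Ceq_dec (refl w p) s) as [E|_]; [apply refl_swap in E; auto; congruence|].
    apply (flip_refl_off c y w); auto.
Qed.

Definition refl_image_candidates (a b e x : C) : list C :=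
  [x; refl b x; refl b e; refl b (refl a e)].

Lemma refl_neq (a p q : C) : onS1 a -> onS1 p -> p <> refl a q -> refl a p <> q.
Proof. intros Ha Hp N E. apply N. now apply refl_swap. Qed.

Lemma refl_partner_chain (c : coloring) (a b e x y w : C) : onS1 e -> onS1 x -> onS1 y ->
  refl_partner c e a -> refl_partner c x b -> refl_partner c y w -> a <> b ->
  ~ In y (refl_image_candidates b a x e) ->
  In (refl w y) (refl_image_candidates a b e x) \/ refl b (refl a y) = refl w y.
Proof.
  intros He Hx Hy [Ha [Ia _]] [Hb [Ib _]] [Hw [Iw Fw]] Nab Ny.
  apply NNPP. intros H. apply not_or_and in H as [Nh Nbay].
  set (h := refl w y) in *.
  assert (Hh : onS1 h) by now apply onS1_refl.
  assert (Ny' : y <> e /\ y <> refl a e /\ y <> refl a x /\ y <> refl a (refl b x))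
    by (repeat split; intros E; apply Ny; rewrite E; simpl; auto).
  assert (Nh' : h <> x /\ h <> refl b x /\ h <> refl b e /\ h <> refl b (refl a e))
    by (repeat split; intros E; apply Nh; rewrite E; simpl; auto).
  destruct Ny' as [N1 [N2 [N3 N4]]], Nh' as [M1 [M2 [M3 M4]]].
  apply (flip_invariant_moved c y _ Iw Hy Fw). fold h.
  (* [y] and [h] are both carried to [a (b h) = w (b (a y))] without changing colour *)
  assert (T : refl a (refl b h) = refl w (refl b (refl a y))).
  { unfold h. rewrite !refl_onS1 by auto using onS1_refl.
    field. repeat split; auto using onS1_neq0. }
  assert (Hay : onS1 (refl a y)) by now apply onS1_refl.
  assert (Hbay : onS1 (refl b (refl a y))) by now apply onS1_refl.
  assert (Hbh : onS1 (refl b h)) by now apply onS1_refl.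
  rewrite <- (flip_refl_off c x b h), <- (flip_refl_off c e a (refl b h)), T by auto using refl_neq.
  rewrite (flip_refl_off c y w), (flip_refl_off c x b), (flip_refl_off c e a);
    auto using refl_neq.
  intros E. exact (Nab (eq_sym (refl_refl_fixed a b y Ha Hy E))).
Qed.

Definition refl_image_exceptions (a b e x : C) : list C :=
  refl_image_candidates b a x e ++ refl_image_candidates a b e x ++
  map (fun z => refl a (refl b z)) (refl_image_candidates b a x e) ++
  map (fun z => refl b (refl a z)) (refl_image_candidates a b e x).

Lemma refl_partner_image (c : coloring) (a b e x y w : C) : onS1 e -> onS1 x -> onS1 y ->
  refl_partner c e a -> refl_partner c x b -> refl_partner c y w ->
  ~ refl_partner c x a -> ~ refl_partner c x (- a) -> ~ In y (refl_image_exceptions a b e x) ->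
  In (refl w y) (refl_image_candidates a b e x) /\ In (refl w y) (refl_image_candidates b a x e).
Proof.
  intros He Hx Hy Pa Pb Pw Na Na' Ny. unfold refl_image_exceptions in Ny.
  assert (Nab : a <> b) by (intros ->; exact (Na Pb)).
  assert (Nab' : a <> - b).
  { intros E. apply Na'. replace (- a) with b by (rewrite E; ring). exact Pb. }
  rewrite !in_app_iff in Ny.
  pose proof Pa as [Ha _]. pose proof Pb as [Hb _]. pose proof Pw as [Hw _].
  assert (Hh : onS1 (refl w y)) by now apply onS1_refl.
  destruct (refl_partner_chain c a b e x y w He Hx Hy Pa Pb Pw Nab) as [I1|E1]; [tauto| |];
  destruct (refl_partner_chain c b a x e y w Hx He Hy Pb Pa Pw (not_eq_sym Nab)) as [I2|E2];
    try tauto; exfalso.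
  - apply Ny. do 3 right. rewrite (refl_refl_swap b a y (refl w y) Hb Ha Hy E2).
    now apply (in_map (fun z => refl b (refl a z))).
  - apply Ny. do 2 right. left. rewrite (refl_refl_swap a b y (refl w y) Ha Hb Hy E1).
    now apply (in_map (fun z => refl a (refl b z))).
  - (* both chains close up: [b (a y) = a (b y)], which forces [a = b] or [a = - b] *)
    rewrite <- E2, !refl_refl in E1 by auto. unfold rot in E1.
    assert (E : a * a = b * b).
    { transitivity (a / b * y / y * a * b); [field; auto using onS1_neq0|].
      rewrite <- E1. field. auto using onS1_neq0. }
    destruct (Csqr_eq a b E); auto.
Qed.

Definition square_quotients (S : list C) : list C :=
  flat_map (fun u => map (fun v => u * u / v) S) S.

Lemma in_square_quotients (S : list C) (u v : C) :
  In u S -> In v S -> In (u * u / v) (square_quotients S).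
Proof.
  intros Hu Hv. apply in_flat_map. exists u. split; auto.
  now apply (in_map (fun v => u * u / v)).
Qed.

Lemma refl_image_eq_two_references (S : list C) (a1 a2 y1 y2 h : C) :
  onS1 a1 -> onS1 a2 -> onS1 y1 -> onS1 y2 ->
  In (refl a1 y1) S -> In (refl a2 y2) S -> In h S ->
  ~ In y1 (S ++ square_quotients S) ->
  ~ In y2 (map (refl a1) S ++ map (fun u => a1 * y1 / (u * u)) S ++
           map (fun u => a1 * refl a1 y1 / (u * u)) S) ->
  In h (refl_image_candidates a1 a2 y1 y2) -> In h (refl_image_candidates a2 a1 y2 y1) ->
  h = refl a1 y1.
Proof.
  intros Ha1 Ha2 Hy1 Hy2 S1 S2 Sh N1 N2 I2 I1.
  rewrite in_app_iff in N1. rewrite !in_app_iff in N2. unfold refl_image_candidates in I1, I2.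
  set (s1 := refl a1 y1) in *. set (s2 := refl a2 y2) in *.
  assert (Hs1 : onS1 s1) by now apply onS1_refl.
  assert (Hs2 : onS1 s2) by now apply onS1_refl.
  pose proof (onS1_neq0 _ Hs1). pose proof (onS1_neq0 _ Hs2).
  pose proof (onS1_neq0 _ Hy1). pose proof (onS1_neq0 _ Hy2).
  assert (Ea1 : a1 = s1 * y1) by now apply refl_eq.
  assert (Ea2 : a2 = s2 * y2) by now apply refl_eq.
  destruct I1 as [E|[E|[E|[E|[]]]]]; [| easy | |].
  - exfalso. apply N1. left. now rewrite E.
  - exfalso. apply N2. left. rewrite (refl_swap a1 y2 h Ha1 Hy2 E). now apply in_map.
  - fold s2 in E. destruct I2 as [F|[F|[F|[F|[]]]]]; exfalso.
    + apply N2. left. rewrite F, <- E. now apply in_map.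
    + apply N1. right. fold s2 in F. rewrite <- F in E.
      replace y1 with (s2 * s2 / s1).
      * now apply in_square_quotients.
      * rewrite <- (refl_eq a1 s2 s2 Hs2 E), Ea1. field. auto.
    + apply N2. right. left. rewrite <- F, refl_onS1, refl_onS1, Ea2 in E by auto.
      replace y2 with (a1 * y1 / (s2 * s2)).
      * now apply (in_map (fun u => a1 * y1 / (u * u))).
      * transitivity (a1 / s2 * y1 / s2); [field; auto | rewrite E; field; auto].
    + apply N2. right. right. fold s1 in F. rewrite <- F, refl_onS1, refl_onS1, Ea2 in E by auto.
      replace y2 with (a1 * s1 / (s2 * s2)).
      * now apply (in_map (fun u => a1 * s1 / (u * u))).
      * transitivity (a1 / s2 * s1 / s2); [field; auto | rewrite E; field; auto].
Qed.

Section NoRotationSymmetry.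

Variable c : coloring.
Hypotheses (NR : ~ rot_symmetric c) (Hsym : forall e, onS1 e -> symmetric (flip c e)).

Lemma refl_partner_image_finite :
  exists S : list C, cofinitely (fun y => forall w, refl_partner c y w -> In (refl w y) S).
Proof.
  pose proof (cofinitely_refl_partner c NR Hsym) as HP.
  destruct (cofinitely_witness _ HP) as [e [He [a Pa]]].
  destruct (cofinitely_witness _ (cofinitely_and _ _ HP
              (cofinitely_and _ _ (cofinitely_not_refl_partner c a)
                                  (cofinitely_not_refl_partner c (- a)))))
    as [x [Hx [[b Pb] [Na Na']]]].
  exists (refl_image_candidates a b e x), (refl_image_exceptions a b e x).
  intros y Hy Ny w Pw. now apply (refl_partner_image c a b e x y w).
Qed.

Lemma refl_partner_image_constant :
  exists s, onS1 s /\ cofinitely (fun y => forall w, refl_partner c y w -> refl w y = s).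
Proof.
  pose proof (cofinitely_refl_partner c NR Hsym) as HP.
  destruct refl_partner_image_finite as [S HS].
  destruct (cofinitely_witness _ (cofinitely_and _ _ (cofinitely_and _ _ HP HS)
              (cofinitely_notin (S ++ square_quotients S))))
    as [y1 [Hy1 [[[a1 P1] S1] N1]]].
  pose proof P1 as [Ha1 _].
  destruct (cofinitely_witness _ (cofinitely_and _ _ (cofinitely_and _ _ HP HS)
              (cofinitely_and _ _ (cofinitely_and _ _ (cofinitely_not_refl_partner c a1)
                                                      (cofinitely_not_refl_partner c (- a1)))
                 (cofinitely_notin (map (refl a1) S ++ map (fun u => a1 * y1 / (u * u)) S ++
                                    map (fun u => a1 * refl a1 y1 / (u * u)) S)))))
    as [y2 [Hy2 [[[a2 P2] S2] [[Na1 Na1'] N2]]]].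
  pose proof P2 as [Ha2 _].
  exists (refl a1 y1). split; [now apply onS1_refl|].
  refine (cofinitely_mono _ _ _
            (cofinitely_and _ _ HS (cofinitely_notin (refl_image_exceptions a1 a2 y1 y2)))).
  intros y Hy [Sy Ny] w Pw.
  destruct (refl_partner_image c a1 a2 y1 y2 y w) as [I2 I1]; auto.
  exact (refl_image_eq_two_references S a1 a2 y1 y2 (refl w y) Ha1 Ha2 Hy1 Hy2
             (S1 a1 P1) (S2 a2 P2) (Sy w Pw) N1 N2 I2 I1).
Qed.

Lemma constant_off_point_of_not_rot_symmetric :
  exists s, onS1 s /\ forall p q, onS1 p -> onS1 q -> p <> s -> q <> s -> c p = c q.
Proof.
  destruct refl_partner_image_constant as [s [Hs Hc]].
  (* the partner reflection of [y] maps [y] to [s], so it is the reflection [refl (s * y)] *)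
  assert (Hrefl : cofinitely (fun a => invariant (flip c s) (refl a))).
  { refine (cofinitely_mono _ _ _ (cofinitely_scale (/ s) _ (onS1_inv s Hs)
              (cofinitely_and _ _ (cofinitely_refl_partner c NR Hsym) Hc))).
    intros a Ha [[w Pw] Hw]. pose proof (Hw w Pw) as E.
    assert (Hy : onS1 (/ s * a)) by auto using onS1_mult, onS1_inv.
    assert (Ew : w = a) by (rewrite (refl_eq w _ s Hy E); field; auto using onS1_neq0).
    subst w. destruct (refl_partner_sym c _ a Hy Pw) as [_ [I _]]. now rewrite E in I. }
  exists s. split; [exact Hs|]. intros p q Hp Hq Np Nq.
  pose proof (constant_of_cofinitely_refl _ Hrefl p q Hp Hq) as E. unfold flip in E.
  now destruct (Ceq_dec p s), (Ceq_dec q s).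
Qed.

End NoRotationSymmetry.

Lemma constant_off_point_of_flips_symmetric (c : coloring) :
  (forall e, onS1 e -> symmetric (flip c e)) ->
  exists s, onS1 s /\ forall p q, onS1 p -> onS1 q -> p <> s -> q <> s -> c p = c q.
Proof.
  intros Hsym. destruct (classic (rot_symmetric c)) as [Rc|NR].
  - exists (RtoC 1). split; [unfold onS1; simpl; lra|].
    intros p q Hp Hq _ _. exact (constant_of_rot_symmetric c Rc Hsym p q Hp Hq).
  - exact (constant_off_point_of_not_rot_symmetric c NR Hsym).
Qed.

(* [1], [alpha], [beta] form a triangle with no nontrivial isometry *)
Definition alpha : C := (3 / 5, 4 / 5)%R.
Definition beta : C := (0, 1)%R.

Definition three_point_coloring (s : C) (k : color) : coloring :=
  fun p => if Ceq_dec p s then swap_color k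
           else if Ceq_dec p (s * alpha) then swap_color k
           else if Ceq_dec p (s * beta) then swap_color k else k.

Definition in_triangle (s p : C) : Prop := p = s \/ p = s * alpha \/ p = s * beta.

Lemma three_point_coloring_swap (s : C) (k : color) (p : C) :
  three_point_coloring s k p = swap_color k <-> in_triangle s p.
Proof.
  unfold three_point_coloring, in_triangle.
  destruct (Ceq_dec p s), (Ceq_dec p (s * alpha)), (Ceq_dec p (s * beta));
    split; intros; auto; try tauto; now destruct k.
Qed.

Lemma in_triangle_cancel (s z : C) :
  s <> 0 -> in_triangle s (s * z) -> z = 1 \/ z = alpha \/ z = beta.
Proof.
  intros Hs H. unfold in_triangle in H.
  assert (K : forall u, s * z = s * u -> z = u).
  { intros u E. replace z with (/ s * (s * z)) by (field; auto). rewrite E. field. auto. }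
  destruct H as [E|[E|E]]; [left|right; left|right; right]; apply K; rewrite E; auto. ring.
Qed.

Lemma triangle_ratio_cases (g u : C) : u <> 0 ->
  (g / u = 1 \/ g / u = alpha \/ g / u = beta) -> g = u \/ g = alpha * u \/ g = beta * u.
Proof.
  intros Hu H. replace g with (g / u * u) by (field; auto).
  destruct H as [-> | [-> | ->]]; [left; ring | right; left | right; right]; reflexivity.
Qed.

Ltac C_neq := let E := fresh in intros E; unfold Cmult, alpha, beta in E; simpl in E;
  injection E; intros; lra.

Lemma three_point_coloring_distinguishing (s : C) (k : color) :
  onS1 s -> distinguishing (three_point_coloring s k).
Proof.
  intros Hs g Ng Ig. pose proof (onS1_neq0 s Hs) as Zs.
  assert (Hg : forall p, onS1 p -> in_triangle s p -> in_triangle s (o2_act g p)).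
  { intros p Hp T. apply (three_point_coloring_swap s k). rewrite Ig by exact Hp.
    now apply (three_point_coloring_swap s k). }
  assert (Ha : onS1 alpha) by (unfold onS1, alpha; simpl; lra).
  assert (Hb : onS1 beta) by (unfold onS1, beta; simpl; lra).
  assert (T1 := Hg s Hs (or_introl eq_refl)).
  assert (T2 := Hg (s * alpha) (onS1_mult _ _ Hs Ha) (or_intror (or_introl eq_refl))).
  assert (T3 := Hg (s * beta) (onS1_mult _ _ Hs Hb) (or_intror (or_intror eq_refl))).
  destruct (O2_cases g Ng) as [[r [Hr [Nr E]]]|[a [Ha' E]]]; rewrite !E in T1, T2, T3.
  - unfold rot in T1, T2.
    replace (r * s) with (s * r) in T1 by ring.
    replace (r * (s * alpha)) with (s * (r * alpha)) in T2 by ring.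
    apply in_triangle_cancel in T1, T2; auto.
    destruct T1 as [|[->| ->]]; [contradiction| |];
      destruct T2 as [T|[T|T]]; revert T; C_neq.
  - (* writing [a = s^2 ga], [ga] would have to lie in three sets with empty intersection *)
    set (ga := a / (s * s)).
    rewrite !refl_onS1 in T1, T2, T3 by auto using onS1_mult.
    replace (a / s) with (s * ga) in T1 by (unfold ga; field; auto).
    replace (a / (s * alpha)) with (s * (ga / alpha)) in T2
      by (unfold ga; field; split; auto using onS1_neq0).
    replace (a / (s * beta)) with (s * (ga / beta)) in T3
      by (unfold ga; field; split; auto using onS1_neq0).
    apply in_triangle_cancel in T1, T2, T3; auto.
    apply triangle_ratio_cases in T2, T3; auto using onS1_neq0.
    destruct T1 as [-> | [-> | ->]].
    + destruct T2 as [T|[T|T]]; revert T; C_neq.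
    + destruct T3 as [T|[T|T]]; revert T; C_neq.
    + destruct T2 as [T|[T|T]]; revert T; C_neq.
Qed.

Close Scope C_scope.

Theorem corollary2p5p1 :
  forall c : coloring,
    exists (cstar : coloring) (L : list (R * R)),
      distinguishing cstar /\
      (length L <= 3)%nat /\
      (forall x, onS1 x -> c x <> cstar x -> In x L).
Proof.
  intros c.
  destruct (classic (exists e, onS1 e /\ distinguishing (flip c e))) as [[e [He De]]|N].
  - exists (flip c e), [e]. split; [exact De | split; [simpl; lia|]].
    intros x _ Hx. unfold flip in Hx. destruct (Ceq_dec x e); [now left | contradiction].
  - destruct (constant_off_point_of_flips_symmetric c) as [s [Hs Hc]].
    { intros e He. apply symmetric_of_not_distinguishing. intros D. apply N. eauto. }
    assert (Nss : (- s)%C <> s).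
    { intros E. destruct s as [a b]. unfold onS1, Copp in *. simpl in *.
      injection E. intros. nra. }
    exists (three_point_coloring s (c (- s)%C)), [s; (s * alpha)%C; (s * beta)%C].
    split; [now apply three_point_coloring_distinguishing | split; [simpl; lia|]].
    intros x Hx Hne. unfold three_point_coloring in Hne.
    destruct (Ceq_dec x s) as [->|N1]; [now left|].
    destruct (Ceq_dec x (s * alpha)%C) as [->|N2]; [right; now left|].
    destruct (Ceq_dec x (s * beta)%C) as [->|N3]; [right; right; now left|].
    exfalso. apply Hne. apply Hc; auto using onS1_opp.
Qed.
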